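(* Let $S_f=\{f_i\ge0: i=1,\ldots,m\}$ be an inequality set in $\mathbf{x}=(x_1,\ldots,x_n)$. Let $I\subseteq\{1,\ldots,m\}$ be the set of indices $k$ such that $f_k=0$ is an implied equality of $S_f$, let $E=\{f_k=0: k\in I\}$, and let $\widetilde{E}=\{x_{k_i}-U_i=0: i=1,\ldots,\tilde n\}$ be the Gauss–Jordan reduced form of $E$ with respect to the variable order $x_1\prec\cdots\prec x_n$. Let $R_f$ be the set of nonzero polynomials among those obtained from $f_j$, $j\in\{1,\ldots,m\}\setminus I$, by substituting $U_i$ for $x_{k_i}$ for every $i=1,\ldots,\tilde n$. Then the inequality set $\{g\ge 0: g\in R_f\}$ is a pure inequality set.
   Context: An inequality set is a finite set $S=\{f_i\ge 0: i=1,\ldots,m\}$ with each $f_i$ a nonzero homogeneous linear polynomial in $\mathbf{x}$ with real coefficients; its solutions are the points of $\mathbb{R}^n$ satisfying all inequalities. The equality $f_k=0$ is an implied equality of $S$ if $f_k(\mathbf{x})=0$ for every solution $\mathbf{x}$ of $S$; $S$ is pure if it has no implied equalities. For a finite system $E$ of homogeneous linear equations in $\mathbf{x}$ of rank $\tilde n$, its Gauss–Jordan reduced form (reduced row echelon form) with respect to the order $x_1\prec\cdots\prec x_n$ is the unique equivalent system $\{x_{k_i}-U_i=0: i=1,\ldots,\tilde n\}$ with $k_1<\cdots<k_{\tilde n}$, where each $U_i$ is a real linear combination of the non-pivot variables $x_j$, $j\notin\{k_1,\ldots,k_{\tilde n}\}$, $j>k_i$. *)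

From HB Require Import structures.
From mathcomp Require Import all_boot all_order all_algebra.
From mathcomp Require Import reals.
Set Implicit Arguments. Unset Strict Implicit. Unset Printing Implicit Defensive.
Import Order.TTheory GRing.Theory Num.Theory.
Local Open Scope ring_scope.

(* A homogeneous linear polynomial c_1 x_1 + ... + c_n x_n is represented by
   its coefficient row vector c : 'rV[R]_n; points of R^n are row vectors. *)
Definition lf (R : realType) (n : nat) (c x : 'rV[R]_n) : R :=
  \sum_(j < n) c 0 j * x 0 j.

Definition is_solution (R : realType) (n : nat) (S : 'rV[R]_n -> Prop)
  (x : 'rV[R]_n) : Prop := forall g, S g -> 0 <= lf g x.

Definition implied_eq (R : realType) (n : nat) (S : 'rV[R]_n -> Prop)
  (g : 'rV[R]_n) : Prop := forall x, is_solution S x -> lf g x = 0.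

Definition pure (R : realType) (n : nat) (S : 'rV[R]_n -> Prop) : Prop :=
  forall g, S g -> ~ implied_eq S g.

(* The system {x_{k_i} - U_i = 0 : i < nt} (U_i given by its coefficient
   vector) is the Gauss-Jordan reduced form of the homogeneous system
   {e = 0 : E e} w.r.t. x_1 < ... < x_n:
   - pivots strictly increasing,
   - U_i only involves non-pivot variables x_j with j > k_i,
   - the system is equivalent to E (same solution set). *)
Definition is_gj_form (R : realType) (n : nat) (E : 'rV[R]_n -> Prop)
  (nt : nat) (k : 'I_nt -> 'I_n) (U : 'I_nt -> 'rV[R]_n) : Prop :=
  [/\ (forall i j : 'I_nt, (i < j)%N -> (k i < k j)%N),
      (forall (i : 'I_nt) (j : 'I_n),
          ((exists l, j = k l) \/ (j <= k i)%N) -> U i 0 j = 0) &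
      (forall x : 'rV[R]_n,
          (forall e, E e -> lf e x = 0) <->
          (forall i : 'I_nt, x 0 (k i) = lf (U i) x))].

Definition subst_gj (R : realType) (n nt : nat) (k : 'I_nt -> 'I_n)
  (U : 'I_nt -> 'rV[R]_n) (f : 'rV[R]_n) : 'rV[R]_n :=
  \row_(j < n) (if [exists l, k l == j] then 0 else f 0 j)
  + \sum_(i < nt) f 0 (k i) *: U i.

From HB Require Import structures.
From mathcomp Require Import all_boot all_order all_algebra.
From mathcomp Require Import reals.
From Stdlib Require Import Classical.
Set Implicit Arguments. Unset Strict Implicit. Unset Printing Implicit Defensive.
Import Order.TTheory GRing.Theory Num.Theory.
Local Open Scope ring_scope.

(* Summing, over the non-implied inequalities f_j >= 0, a
   solution on which f_j is positive gives a solution x0 on which every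
   non-implied f_j is positive.  x0 satisfies all implied equalities, hence
   the reduced system x_{k_i} = U_i, so the substituted polynomials take the
   same values at x0 as the original ones: x0 solves R_f and is strictly
   positive on each of its members, which therefore are not implied. *)

Section LinearForms.
Variables (R : realType) (n : nat).
Implicit Types (c x : 'rV[R]_n) (S : 'rV[R]_n -> Prop).

Lemma lfDl c1 c2 x : lf (c1 + c2) x = lf c1 x + lf c2 x.
Proof. by rewrite /lf -big_split; apply: eq_bigr => j _; rewrite mxE mulrDl. Qed.

Lemma lfZl a c x : lf (a *: c) x = a * lf c x.
Proof. by rewrite /lf mulr_sumr; apply: eq_bigr => j _; rewrite mxE mulrA. Qed.

Lemma lf0l x : lf 0 x = 0.
Proof. by rewrite /lf big1 // => j _; rewrite mxE mul0r. Qed.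

Lemma lfDr c x1 x2 : lf c (x1 + x2) = lf c x1 + lf c x2.
Proof. by rewrite /lf -big_split; apply: eq_bigr => j _; rewrite mxE mulrDr. Qed.

Lemma lf0r c : lf c 0 = 0.
Proof. by rewrite /lf big1 // => j _; rewrite mxE mulr0. Qed.

Lemma lf_suml (I : finType) (F : I -> 'rV[R]_n) x :
  lf (\sum_i F i) x = \sum_i lf (F i) x.
Proof.
exact: (big_morph (fun c => lf c x) (fun c1 c2 => lfDl c1 c2 x) (lf0l x)).
Qed.

Lemma lf_sumr (I : finType) c (F : I -> 'rV[R]_n) :
  lf c (\sum_i F i) = \sum_i lf c (F i).
Proof. exact: (big_morph (lf c) (lfDr c) (lf0r c)). Qed.

Lemma is_solution0 S : is_solution S 0.
Proof. by move=> g _; rewrite lf0r. Qed.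

Lemma is_solutionD S x1 x2 :
  is_solution S x1 -> is_solution S x2 -> is_solution S (x1 + x2).
Proof. by move=> s1 s2 g Sg; rewrite lfDr addr_ge0 ?s1 ?s2. Qed.

Lemma is_solution_sum S (I : finType) (X : I -> 'rV[R]_n) :
  (forall i, is_solution S (X i)) -> is_solution S (\sum_i X i).
Proof.
by move=> sX; elim/big_ind: _ => //; [apply: is_solution0 | apply: is_solutionD].
Qed.

Lemma not_implied_eq_witness S g :
  S g -> ~ implied_eq S g -> exists2 x, is_solution S x & 0 < lf g x.
Proof.
move=> Sg g_nimp; apply: NNPP => no_witness; apply: g_nimp => x sx.
apply/eqP; rewrite eq_le (sx g Sg) andbT leNgt; apply/negP => gx_pos.
by apply: no_witness; exists x.
Qed.

Lemma exists_relint_solution (I : finType) (f : I -> 'rV[R]_n) :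
  let S := fun g => exists i, g = f i in
  exists2 x0, is_solution S x0 &
    forall i, ~ implied_eq S (f i) -> 0 < lf (f i) x0.
Proof.
move=> S.
have witness i : exists x, is_solution S x /\
    (~ implied_eq S (f i) -> 0 < lf (f i) x).
  have [fi_eq | fi_neq] := classic (implied_eq S (f i)).
    by exists 0; split => [|/(_ fi_eq)]; first exact: is_solution0.
  have Sfi : S (f i) by exists i.
  by have [x sx fix_gt0] := not_implied_eq_witness Sfi fi_neq; exists x.
have [X sX] := fin_all_exists witness.
exists (\sum_i X i); first by apply: is_solution_sum => i; case: (sX i).
move=> i fi_neq; rewrite lf_sumr (bigD1 i) //=.
rewrite ltr_wpDr ?(sX i).2 //; apply: sumr_ge0 => l _.
by apply: (sX l).1; exists i.
Qed.

End LinearForms.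

Lemma incr_ord_inj p q (h : 'I_p -> 'I_q) :
  (forall i j : 'I_p, (i < j)%N -> (h i < h j)%N) -> injective h.
Proof.
move=> h_incr i j hij; apply/val_inj/eqP.
by case: ltngtP => // /h_incr; rewrite hij ltnn.
Qed.

Section GaussJordanSubstitution.
Variables (R : realType) (n nt : nat) (k : 'I_nt -> 'I_n) (U : 'I_nt -> 'rV[R]_n).

Lemma sum_pivots (F : 'I_n -> R) : injective k ->
  \sum_(j | [exists l, k l == j]) F j = \sum_l F (k l).
Proof.
move=> k_inj; rewrite -(big_imset F (in2W k_inj)) /=.
apply: eq_bigl => j; apply/existsP/imsetP => -[l]; first by move/eqP <-; exists l.
by move=> _ ->; exists l.
Qed.

Lemma lf_subst_gj (f x : 'rV[R]_n) : injective k ->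
  (forall i, x 0 (k i) = lf (U i) x) -> lf (subst_gj k U f) x = lf f x.
Proof.
move=> k_inj xU; rewrite /subst_gj lfDl lf_suml.
rewrite [lf f x](bigID (fun j => [exists l, k l == j])) /= addrC.
congr (_ + _).
  rewrite /lf (bigID (fun j => [exists l, k l == j])) /= big1 ?add0r.
    by apply: eq_bigr => j /negbTE pj; rewrite mxE pj.
  by move=> j pj; rewrite mxE pj mul0r.
by rewrite sum_pivots //; apply: eq_bigr => i _; rewrite lfZl xU.
Qed.

End GaussJordanSubstitution.

Theorem theorem5 (R : realType) (n m : nat) (f : 'I_m -> 'rV[R]_n)
  (hf : forall i, f i != 0)
  (nt : nat) (k : 'I_nt -> 'I_n) (U : 'I_nt -> 'rV[R]_n) :
  let Sf := fun g : 'rV[R]_n => exists i, g = f i in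
  let I := fun i : 'I_m => implied_eq Sf (f i) in
  let E := fun e : 'rV[R]_n => exists i, I i /\ e = f i in
  is_gj_form E k U ->
  let Rf := fun g : 'rV[R]_n =>
    exists j, ~ I j /\ g = subst_gj k U (f j) /\ g != 0 in
  pure Rf.
Proof.
move=> Sf I E [k_incr _ E_gj] Rf _ [j [nIj [-> _]]] Rf_eq.
have k_inj := incr_ord_inj k_incr.
have [x0 sx0 x0_pos] := exists_relint_solution f.
have x0_pivots : forall i, x0 0 (k i) = lf (U i) x0.
  by apply/E_gj => _ [i [Ii ->]]; exact: Ii sx0.
have : lf (subst_gj k U (f j)) x0 = 0.
  apply: Rf_eq => _ [l [nIl [-> _]]].
  by rewrite lf_subst_gj // ltW ?x0_pos.
by rewrite lf_subst_gj // => fj0; move: (x0_pos j nIj); rewrite fj0 ltxx.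
Qed.
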